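(* For every elementary cellular automaton rule $\alpha\in\{0,\dots,255\}$, every $n\ge1$, every $\Delta,\Delta'\in\mathcal{P}_n$ and every $i\in\mathbb{Z}_n$: if $d^{\leftarrow}_\Delta(i)=d^{\leftarrow}_{\Delta'}(i)$ and $d^{\rightarrow}_\Delta(i)=d^{\rightarrow}_{\Delta'}(i)$, then $f^{(\Delta)}_{\alpha,n}(x)_i=f^{(\Delta')}_{\alpha,n}(x)_i$ for every $x\in\{0,1\}^n$.
   Context: Cells are indexed by $\mathbb{Z}_n=\{0,\dots,n-1\}$, indices modulo $n$. For a Wolfram number $\alpha$, $r_\alpha(x_1,x_2,x_3)$ is the bit of $\alpha$ of weight $2^{4x_1+2x_2+x_3}$, and $f_{\alpha,n}(x)_i=r_\alpha(x_{i-1},x_i,x_{i+1})$. An update schedule is an ordered partition $\Delta=(\Delta_1,\dots,\Delta_k)$ of $\mathbb{Z}_n$ into nonempty blocks; $\mathcal{P}_n$ is the set of them. For a block $B$ let $f^{(B)}(x)_i=f_{\alpha,n}(x)_i$ if $i\in B$ and $x_i$ otherwise; $f^{(\Delta)}_{\alpha,n}=f^{(\Delta_k)}\circ\cdots\circ f^{(\Delta_1)}$. For $u,v\in\mathbb{Z}_n$ with $u\in\Delta_a$, $v\in\Delta_b$, the label is $lab_\Delta((u,v))=\oplus$ if $b\le a$ and $lab_\Delta((u,v))=\ominus$ if $a<b$. Define $d^{\leftarrow}_\Delta(i)=\max\{k\in\mathbb{N}:\forall j\in\mathbb{N},\,0<j<k\Rightarrow lab_\Delta((i-j,i-j+1))=\ominus\}$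 and $d^{\rightarrow}_\Delta(i)=\max\{k\in\mathbb{N}:\forall j\in\mathbb{N},\,0<j<k\Rightarrow lab_\Delta((i+j,i+j-1))=\ominus\}$ (these maxima are finite). *)

From mathcomp Require Import all_boot.
Set Implicit Arguments. Unset Strict Implicit. Unset Printing Implicit Defensive.

(* Cells are 'I_n; i-1 and i+1 (mod n) are ord_pred i and ordS i. *)
Definition cell_sub n (i : 'I_n) (j : nat) : 'I_n := iter j (@ord_pred n) i.
Definition cell_add n (i : 'I_n) (j : nat) : 'I_n := iter j (@ordS n) i.

Definition rule (alpha : nat) (x1 x2 x3 : bool) : bool :=
  odd (alpha %/ 2 ^ (4 * x1 + 2 * x2 + x3)).

Definition eca n (alpha : nat) (x : 'I_n -> bool) (i : 'I_n) : bool :=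
  rule alpha (x (ord_pred i)) (x i) (x (ordS i)).

Definition block_update n (alpha : nat) (B : {set 'I_n}) (x : 'I_n -> bool)
  : 'I_n -> bool :=
  fun i => if i \in B then eca alpha x i else x i.

(* An update schedule: ordered partition (Delta_1,...,Delta_k) of Z_n into
   nonempty blocks, represented as the sequence of its blocks in order. *)
Definition is_schedule n (D : seq {set 'I_n}) : Prop :=
  [/\ all (fun B => B != set0) D,
      pairwise (fun A B : {set 'I_n} => [disjoint A & B]) D
    & \bigcup_(B <- D) B = [set: 'I_n]].

Definition schedule_update n (alpha : nat) (D : seq {set 'I_n})
  (x : 'I_n -> bool) : 'I_n -> bool :=
  foldl (fun y B => block_update alpha B y) x D.

Definition block_index n (D : seq {set 'I_n}) (u : 'I_n) : nat :=
  find (fun B : {set 'I_n} => u \in B) D.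

(* lab_Delta((u,v)) = minus  iff  a < b, where u in Delta_a, v in Delta_b. *)
Definition lab_minus n (D : seq {set 'I_n}) (u v : 'I_n) : bool :=
  block_index D u < block_index D v.

Definition dleft_cond n (D : seq {set 'I_n}) (i : 'I_n) (k : nat) : Prop :=
  forall j, 0 < j < k -> lab_minus D (cell_sub i j) (cell_sub i j.-1).
Definition is_dleft n (D : seq {set 'I_n}) (i : 'I_n) (d : nat) : Prop :=
  dleft_cond D i d /\ forall k, dleft_cond D i k -> k <= d.

Definition dright_cond n (D : seq {set 'I_n}) (i : 'I_n) (k : nat) : Prop :=
  forall j, 0 < j < k -> lab_minus D (cell_add i j) (cell_add i j.-1).
Definition is_dright n (D : seq {set 'I_n}) (i : 'I_n) (d : nat) : Prop :=
  dright_cond D i d /\ forall k, dright_cond D i k -> k <= d.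

From mathcomp Require Import all_boot zify.
Set Implicit Arguments. Unset Strict Implicit. Unset Printing Implicit Defensive.

(* A cell keeps its initial value until its
   own block is updated, and from then on holds the local rule applied to the
   state just before that block. So the new value of cell [i] reads its left
   neighbour [i-1] in its initial state if [i-1] is updated no earlier than [i],
   and otherwise in its already updated state, which in turn reads [i-2], and so
   on: the left neighbourhood is unfolded exactly along the maximal run of
   [lab = minus] edges ending at [i], whose length is [d^<-(i)], and likewise on
   the right with [d^->(i)]. Hence the new value of [i] is a fixed function of
   [x], [d^<-(i)] and [d^->(i)] only. *)

Section Schedule.
Variables (n alpha : nat) (D : seq {set 'I_n}).
Hypothesis D_disjoint : pairwise (fun A B : {set 'I_n} => [disjoint A & B]) D.
Hypothesis D_cover : \bigcup_(B <- D) B = [set: 'I_n].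

Local Notation bi := (block_index D).

Lemma has_block c : has (fun B : {set 'I_n} => c \in B) D.
Proof.
have : c \in \bigcup_(B <- D) B by rewrite D_cover inE.
by rewrite bigcup_seq => /bigcupP[B BD cB]; apply/hasP; exists B.
Qed.

Lemma block_index_lt c : bi c < size D.
Proof. by rewrite /block_index -has_find has_block. Qed.

Lemma mem_block_index c : c \in nth set0 D (bi c).
Proof. exact: (nth_find set0 (has_block c)). Qed.

Definition prefix_update (x : 'I_n -> bool) t :=
  schedule_update alpha (take t D) x.

Lemma prefix_update_size x : prefix_update x (size D) = schedule_update alpha D x.
Proof. by rewrite /prefix_update take_size. Qed.

Lemma prefix_updateS x t c :
  prefix_update x t.+1 c =
  if (t < size D) && (c \in nth set0 D t) then eca alpha (prefix_update x t) c
  else prefix_update x t c.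
Proof.
case: ltnP => [tD|Dt] /=.
  by rewrite /prefix_update (take_nth set0 tD) /schedule_update foldl_rcons.
by rewrite /prefix_update !take_oversize // ltnW.
Qed.

Lemma prefix_update_before x t c : t <= bi c -> prefix_update x t c = x c.
Proof.
elim: t => [|t IHt] tc; first by rewrite /prefix_update take0.
by rewrite prefix_updateS (before_find set0 tc) andbF IHt // ltnW.
Qed.

Lemma prefix_update_after x t c :
  bi c < t -> prefix_update x t c = eca alpha (prefix_update x (bi c)) c.
Proof.
elim: t => [|t IHt] // ct; rewrite prefix_updateS.
case: (ltngtP (bi c) t) => [lt_ct|lt_tc|<-].
- rewrite IHt //; case tD: (t < size D) => //=.
  have disj_ct := pairwiseP set0 D_disjoint _ _ (block_index_lt c) tD lt_ct.
  by rewrite (disjointFr disj_ct (mem_block_index c)).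
- by move: ct; rewrite ltnS leqNgt lt_tc.
- by rewrite block_index_lt mem_block_index.
Qed.

Section Cascade.
(* [step] is the direction in which updates propagate towards [c], and [g] is
   the local rule with its arguments read from the [step] side. *)
Variables (step back : 'I_n -> 'I_n) (g : bool -> bool -> bool -> bool).
Hypothesis stepK : cancel step back.
Hypothesis eca_step : forall y c, eca alpha y c = g (y (step c)) (y c) (y (back c)).

Definition descends c j := bi (iter j.+1 step c) < bi (iter j step c).

Fixpoint cascade (x : 'I_n -> bool) k c :=
  if k is k'.+1 then g (cascade x k' (step c)) (x c) (x (back c)) else x c.

Lemma prefix_update_cascade x k c :
  (forall j, j < k -> descends c j) -> ~~ descends c k ->
  prefix_update x (bi c) (step c) = cascade x k (step c).
Proof.
elim: k c => [|k IHk] c desc stop.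
  by rewrite prefix_update_before // leqNgt.
have lt_step_c : bi (step c) < bi c := desc 0 isT.
rewrite prefix_update_after // eca_step /= stepK.
rewrite (prefix_update_before _ (leqnn _)) (prefix_update_before _ (ltnW lt_step_c)).
congr g; apply: IHk => [j jk|]; rewrite /descends -!iterSr.
  exact: desc.
exact: stop.
Qed.

Definition run_cond c k :=
  forall j, 0 < j < k -> lab_minus D (iter j step c) (iter j.-1 step c).

Lemma max_run_descends c d :
  run_cond c d -> (forall k, run_cond c k -> k <= d) ->
  [/\ 0 < d, forall j, j < d.-1 -> descends c j & ~~ descends c d.-1].
Proof.
move=> run max_run; have d_gt0 : 0 < d by apply: max_run => j; lia.
split=> // [j jd|]; first by apply: (run j.+1); lia.
apply/negP => desc_d; have : run_cond c d.+1; last by move/max_run; rewrite ltnn.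
move=> j /andP[j_gt0]; rewrite ltnS leq_eqVlt => /orP[/eqP->|jd].
  by rewrite -(ltn_predK d_gt0).
by apply: run; rewrite j_gt0.
Qed.

Lemma prefix_update_max_run x c d :
  run_cond c d -> (forall k, run_cond c k -> k <= d) ->
  prefix_update x (bi c) (step c) = cascade x d.-1 (step c).
Proof.
by move=> run max_run; case: (max_run_descends run max_run) => _ desc stop;
  apply: prefix_update_cascade.
Qed.

End Cascade.

Lemma schedule_update_cascades x i dl dr :
  is_dleft D i dl -> is_dright D i dr ->
  schedule_update alpha D x i =
  rule alpha (cascade (@ord_pred n) (@ordS n) (rule alpha) x dl.-1 (ord_pred i)) (x i)
    (cascade (@ordS n) (@ord_pred n) (fun r m l => rule alpha l m r) x dr.-1 (ordS i)).
Proof.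
move=> [runl max_runl] [runr max_runr].
rewrite -prefix_update_size prefix_update_after ?block_index_lt // /eca.
rewrite (prefix_update_before _ (leqnn _)).
rewrite (prefix_update_max_run (g := rule alpha) (@ord_predK n) (fun _ _ => erefl)
           x runl max_runl).
by rewrite (prefix_update_max_run (g := fun r m l => rule alpha l m r) (@ordSK n)
              (fun _ _ => erefl) x runr max_runr).
Qed.

End Schedule.

Theorem mainTheorem10 (alpha n : nat) (D D' : seq {set 'I_n}) (i : 'I_n) :
  alpha <= 255 -> 0 < n ->
  is_schedule D -> is_schedule D' ->
  (exists dl, is_dleft D i dl /\ is_dleft D' i dl) ->
  (exists dr, is_dright D i dr /\ is_dright D' i dr) ->
  forall x : 'I_n -> bool,
    schedule_update alpha D x i = schedule_update alpha D' x i.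
Proof.
move=> _ _ [_ disjD coverD] [_ disjD' coverD'] [dl [Dl D'l]] [dr [Dr D'r]] x.
by rewrite (schedule_update_cascades alpha disjD coverD x Dl Dr)
           (schedule_update_cascades alpha disjD' coverD' x D'l D'r).
Qed.
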